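(* Let $\alpha,\beta$ be relatively prime positive integers and $n$ a positive integer with $s=s(n)>2$. If $(b,a)$ is $n$-good, then $a\le(\beta-1)g_s+\alpha b$.
   Context: The $(\alpha,\beta)$-walk $w_k(a_1,a_2)$ for positive integers $a_1,a_2$ is given by $w_1=a_1$, $w_2=a_2$, $w_{k+2}=\alpha w_{k+1}+\beta w_k$ ($k\ge1$). For a positive integer $n$, $s(n;a_1,a_2)$ is the (largest) index $s$ with $w_s(a_1,a_2)=n$ ($-\infty$ if none), and $s(n)=\max_{a_1,a_2\ge1}s(n;a_1,a_2)$. A pair $(a_1,a_2)$ with $a_1,a_2\ge1$ is $n$-good if $s(n;a_1,a_2)=s(n)$. The sequence $g_k$: $g_1=1$, $g_2=\alpha$, $g_{k+2}=\alpha g_{k+1}+\beta g_k$ for $k\ge1$. *)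

From mathcomp Require Import all_boot.
Set Implicit Arguments. Unset Strict Implicit. Unset Printing Implicit Defensive.

(* Pairs (w_{k+1}, w_{k+2}) of the (alpha,beta)-walk starting at (a1,a2). *)
Fixpoint walk_pair (alpha beta a1 a2 k : nat) : nat * nat :=
  match k with
  | 0 => (a1, a2)
  | k'.+1 => let (x, y) := walk_pair alpha beta a1 a2 k' in (y, alpha * y + beta * x)
  end.

(* walk alpha beta a1 a2 k = w_k(a1,a2) for k >= 1 (1-based: w_1 = a1, w_2 = a2,
   w_{k+2} = alpha w_{k+1} + beta w_k).  Index 0 is junk and never used. *)
Definition walk (alpha beta a1 a2 k : nat) : nat :=
  (walk_pair alpha beta a1 a2 k.-1).1.

Definition g (alpha beta k : nat) : nat := walk alpha beta 1 alpha k.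

Definition is_s_walk (alpha beta n a1 a2 s : nat) : Prop :=
  [/\ 1 <= s, walk alpha beta a1 a2 s = n &
      forall k, 1 <= k -> walk alpha beta a1 a2 k = n -> k <= s].

(* s = s(n) = max over a1, a2 >= 1 of s(n; a1, a2) (pairs with s(n;a1,a2) = -oo
   do not contribute to the max). *)
Definition is_s (alpha beta n s : nat) : Prop :=
  (exists a1 a2, [/\ 1 <= a1, 1 <= a2 & is_s_walk alpha beta n a1 a2 s]) /\
  (forall a1 a2 t, 1 <= a1 -> 1 <= a2 -> is_s_walk alpha beta n a1 a2 t -> t <= s).

Definition n_good (alpha beta n a1 a2 : nat) : Prop :=
  [/\ 1 <= a1, 1 <= a2 &
      exists s, is_s alpha beta n s /\ is_s_walk alpha beta n a1 a2 s].

From mathcomp Require Import all_boot zify ring.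
Set Implicit Arguments. Unset Strict Implicit. Unset Printing Implicit Defensive.

(* Write U for the Lucas sequence U_0 = 0, U_1 = 1, U_{k+2} = α U_{k+1} + β U_k, so that
   g_k = U_k and w_{k+2}(x, y) = β U_k x + U_{k+1} y. If (b, a) is n-good with s = s(n) and
   a > (β-1) U_s + α b, choose t < β with t U_s ≡ a - α b (mod β), which is possible since
   β and U_s are coprime, and write a - α b = t U_s + β c; then c > 0 and the walk from
   (c, b + t U_{s-1}) reaches n at index s + 1, contradicting the maximality of s. *)

Section LucasWalk.

Variables al be : nat.

Definition lucasU (k : nat) : nat := (walk_pair al be 0 1 k).1.

Lemma walk_pairS x y k :
  walk_pair al be x y k.+1 =
  ((walk_pair al be x y k).2,
   al * (walk_pair al be x y k).2 + be * (walk_pair al be x y k).1).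
Proof. by rewrite /=; case: (walk_pair al be x y k). Qed.

Lemma lucasU0 : lucasU 0 = 0. Proof. by []. Qed.

Lemma lucasU1 : lucasU 1 = 1. Proof. by []. Qed.

Lemma lucasUSS k : lucasU k.+2 = al * lucasU k.+1 + be * lucasU k.
Proof. by rewrite /lucasU !walk_pairS. Qed.

Lemma walk_pair_lucasU x y k :
  walk_pair al be x y k.+1 =
  (be * lucasU k * x + lucasU k.+1 * y, be * lucasU k.+1 * x + lucasU k.+2 * y).
Proof.
elim: k => [|k IH].
  by rewrite walk_pairS lucasUSS lucasU0 lucasU1 /=; f_equal; ring.
by rewrite walk_pairS IH /= [lucasU k.+3]lucasUSS (lucasUSS k); f_equal; ring.
Qed.

Lemma walk_lucasU x y k :
  walk al be x y k.+2 = be * lucasU k * x + lucasU k.+1 * y.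
Proof. by rewrite /walk walk_pair_lucasU. Qed.

Lemma g_lucasU k : 0 < k -> g al be k = lucasU k.
Proof.
case: k => [|[|k]] // _; rewrite /g walk_lucasU [lucasU k.+2]lucasUSS; ring.
Qed.

Lemma coprime_lucasU k : coprime al be -> coprime be (lucasU k.+1).
Proof.
move=> co_al_be; elim: k => [|k IH]; first by rewrite lucasU1 coprimen1.
by rewrite lucasUSS /coprime addnC mulnC gcdnMDl -/(coprime _ _) coprimeMr
  coprime_sym co_al_be.
Qed.

Lemma walk_lengthen b a c t m :
  al * b + t * lucasU m.+2 + be * c = a ->
  walk al be c (b + t * lucasU m.+1) m.+3 = walk al be b a m.+2.
Proof. by move=> <-; rewrite !walk_lucasU [lucasU m.+2]lucasUSS; ring. Qed.

Section PositiveWalk.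

Hypotheses (al_gt0 : 0 < al) (be_gt0 : 0 < be).

Lemma walk_pair_gt0 x y k : 0 < x -> 0 < y ->
  0 < (walk_pair al be x y k).1 /\ 0 < (walk_pair al be x y k).2.
Proof.
move=> x_gt0 y_gt0; elim: k => [|k [IH1 IH2]] //.
by rewrite walk_pairS; split=> //=; nia.
Qed.

Lemma walk_pair_snd_gt x y k : 0 < x -> 0 < y -> k < (walk_pair al be x y k).2.
Proof.
move=> x_gt0 y_gt0; elim: k => [|k IH] //.
have [u_gt0 _] := walk_pair_gt0 k x_gt0 y_gt0.
rewrite walk_pairS /=; nia.
Qed.

Lemma walk_index_lt x y k : 0 < x -> 0 < y -> k < walk al be x y k + 2.
Proof.
move=> x_gt0 y_gt0; case: k => [|[|k]]; rewrite ?addn2 //.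
by rewrite /walk walk_pairS /= !ltnS walk_pair_snd_gt.
Qed.

Lemma exists_is_s_walk n x y k : 0 < x -> 0 < y ->
  walk al be x y k = n -> 0 < k -> exists t, k <= t /\ is_s_walk al be n x y t.
Proof.
move=> x_gt0 y_gt0 hit_k k_gt0.
pose hit i := (0 < i) && (walk al be x y i == n).
have hit_ex : exists i, hit i by exists k; rewrite /hit k_gt0 hit_k eqxx.
have hit_ub i : hit i -> i <= n.+1.
  by case/andP=> _ /eqP <-; rewrite -ltnS -addn2 walk_index_lt.
case: (ex_maxnP hit_ex hit_ub) => t /andP[t_gt0 /eqP hit_t] t_max.
exists t; split; first by apply: t_max; rewrite /hit k_gt0 hit_k eqxx.
by split=> // i i_gt0 hit_i; apply: t_max; rewrite /hit i_gt0 hit_i eqxx.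
Qed.

End PositiveWalk.

End LucasWalk.

Lemma exists_mod_inverse m G : coprime m G -> exists u, u * G = 1 %[mod m].
Proof.
have [->|G_gt0 co_m_G] := posnP G.
  by rewrite /coprime gcdn0 => /eqP ->; exists 0; rewrite !modn1.
case: (egcdnP m G_gt0) => u v e _; exists u.
by rewrite e gcdnC (eqP co_m_G) modnMDl.
Qed.

Lemma exists_mod_solution m G D : 0 < m -> coprime m G ->
  exists2 t, t < m & t * G = D %[mod m].
Proof.
move=> m_gt0 co_m_G; have [u uG1] := exists_mod_inverse co_m_G.
exists ((D * u) %% m); first by rewrite ltn_mod.
by rewrite modnMml -mulnA -modnMmr uG1 modnMmr muln1.
Qed.

Lemma exists_longer_walk al be b a m :
  0 < be -> coprime al be -> 0 < b ->
  (be - 1) * lucasU al be m.+2 + al * b < a ->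
  exists c b', [/\ 0 < c, 0 < b' & walk al be c b' m.+3 = walk al be b a m.+2].
Proof.
move=> be_gt0 co_al_be b_gt0 a_big.
have [t t_lt tG_D] :=
  exists_mod_solution (a - al * b) be_gt0 (coprime_lucasU m.+1 co_al_be).
have tG_lt : t * lucasU al be m.+2 < a - al * b.
  by apply: leq_ltn_trans (leq_mul (_ : t <= be - 1) (leqnn _)) _; lia.
have /dvdnP[c Dc] : be %| a - al * b - t * lucasU al be m.+2.
  by rewrite -eqn_mod_dvd ?tG_D // ltnW.
exists c, (b + t * lucasU al be m.+1); split; [by case: c Dc => [|c]; lia | lia |].
by apply: walk_lengthen; lia.
Qed.

Lemma is_s_uniq al be n s1 s2 :
  is_s al be n s1 -> is_s al be n s2 -> s1 = s2.
Proof.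
move=> [[x1 [y1 [x1_gt0 y1_gt0 s1_walk]]] s1_max].
move=> [[x2 [y2 [x2_gt0 y2_gt0 s2_walk]]] s2_max].
by apply/eqP; rewrite eqn_leq (s2_max x1 y1) ?(s1_max x2 y2).
Qed.

Unset Implicit Arguments.

Theorem lemma2p6 (alpha beta n s b a : nat) :
  0 < alpha -> 0 < beta -> coprime alpha beta -> 0 < n ->
  is_s alpha beta n s -> 2 < s ->
  n_good alpha beta n b a ->
  a <= (beta - 1) * g alpha beta s + alpha * b.
Proof.
move=> al_gt0 be_gt0 co_al_be _ s_max s_gt2 [b_gt0 _ [s' [s'_max s_walk]]].
move: s_walk; rewrite (is_s_uniq s'_max s_max) => {s' s'_max} s_walk.
case: s s_max s_walk s_gt2 => [|[|m]] // [_ s_maxw] [_ hit_s _] _.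
rewrite g_lucasU // leqNgt; apply/negP => a_big.
have [c [b' [c_gt0 b'_gt0]]] := exists_longer_walk be_gt0 co_al_be b_gt0 a_big.
rewrite hit_s => hit_longer.
have [t [lt_s_t t_walk]] := exists_is_s_walk al_gt0 be_gt0 c_gt0 b'_gt0 hit_longer isT.
by have := s_maxw c b' t c_gt0 b'_gt0 t_walk; rewrite leqNgt (leq_trans _ lt_s_t).
Qed.
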